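(* For every number of candidates $m\ge 2$, the distortion of \textsc{PluralityMatching} (over all metric spaces, i.e.\ $\alpha=1$, with worst-case choice among the candidates it may return) is $3$, and this is optimal: no deterministic social choice rule has distortion smaller than $3$.
   Context: An election consists of voters $V=\{1,\dots,n\}$, a finite set $C$ of $m$ candidates, and a profile $\sigma=(\sigma_i)_{i\in V}$ of linear orders over $C$; $c\succeq_i c'$ means $c=c'$ or $i$ ranks $c$ above $c'$. A distance function $d$ on $V\cup C$ is nonnegative, symmetric and satisfies the triangle inequality (co-location allowed); it is consistent with $\sigma$ if $d(i,c)\le d(i,c')$ whenever $i$ ranks $c$ above $c'$. $\mathrm{top}(i)$ is $i$'s first-ranked candidate; $\mathrm{SC}(c)=\sum_{i\in V} d(i,c)$. A deterministic social choice rule maps each profile (of any number of voters, over the fixed set $C$) to a candidate; its distortion is $\sup_\sigma \sup_{d \text{ consistent with }\sigma} \mathrm{SC}(f(\sigma))/\min_{c}\mathrm{SC}(c)$. The integral domination graph $G(a)$ of candidate $a$ is the bipartite graph with both sides copies of $V$ and edge $(i,j)$ iff $a\succeq_i \mathrm{top}(j)$. \textsc{PluralityMatching} returns an arbitrary candidate $a$ for which $G(a)$ admits a perfect matching. *)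

From mathcomp Require Import all_boot all_order all_algebra all_fingroup.
Set Implicit Arguments. Unset Strict Implicit. Unset Printing Implicit Defensive.
Import Order.TTheory GRing.Theory Num.Theory.
Local Open Scope ring_scope.

(* A profile assigns to each voter a linear order over the candidates,
   encoded as a permutation: (sigma i) c is the position of c in voter i's
   ranking (0 = first); i ranks c above c' iff (sigma i c < sigma i c'). *)
Definition profile (n m : nat) := 'I_n -> {perm 'I_m}.

Definition weakly_prefers n m (sigma : profile n m) (i : 'I_n) (c c' : 'I_m) : bool :=
  (sigma i c <= sigma i c')%N.

Definition is_top n m (sigma : profile n m) (j : 'I_n) (t : 'I_m) : bool :=
  [forall c, (sigma j t <= sigma j c)%N].

Definition dom_edge n m (sigma : profile n m) (a : 'I_m) (i j : 'I_n) : bool :=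
  [exists t, is_top sigma j t && weakly_prefers sigma i a t].

(* G(a) admits a perfect matching (both sides are copies of V) *)
Definition has_perfect_matching n m (sigma : profile n m) (a : 'I_m) : Prop :=
  exists pi : {perm 'I_n}, forall i, dom_edge sigma a i (pi i).

Definition point n m := ('I_n + 'I_m)%type.

(* d is a (pseudo)metric on V \cup C (co-location allowed). *)
Definition is_metric (R : realFieldType) n m (d : point n m -> point n m -> R) : Prop :=
  [/\ forall x y, 0 <= d x y,
      forall x, d x x = 0,
      forall x y, d x y = d y x
    & forall x y z, d x z <= d x y + d y z].

Definition consistent (R : realFieldType) n m (sigma : profile n m)
  (d : point n m -> point n m -> R) : Prop :=
  forall (i : 'I_n) (c c' : 'I_m), (sigma i c < sigma i c')%N ->
    d (inl i) (inr c) <= d (inl i) (inr c').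

Definition SC (R : realFieldType) n m (d : point n m -> point n m -> R) (c : 'I_m) : R :=
  \sum_(i < n) d (inl i) (inr c).

Definition rule (m : nat) := forall n, profile n m -> 'I_m.

From mathcomp Require Import all_boot all_order all_algebra all_fingroup.
From mathcomp Require Import lra.
Import Order.TTheory GRing.Theory Num.Theory.

Set Implicit Arguments.
Unset Strict Implicit.
Unset Printing Implicit Defensive.

(* If voter i is matched to j in G(a), then
   d(i,a) <= d(i,top j) <= d(i,c) + d(c,j) + d(j,top j) <= d(i,c) + 2 d(j,c),
   and summing along a perfect matching gives SC(a) <= 3 SC(c).  A candidate
   with a perfect matching exists by "plurality veto": voters in turn remove
   the remaining voter whose top they like least; every voter weakly prefers
   the top of the last survivor to the top of the voter it removed.
   Conversely, take two voters with distinct tops.  Whatever w a rule picks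
   differs from the top b of some voter u; putting u and b at 0, the other
   voter at 1 and all other candidates at 2 on a line gives SC(b) = 1 and
   SC(w) = 3. *)

Section PluralityVeto.

Variables (V : finType) (C : eqType) (top : V -> C) (rank : V -> C -> nat).

Lemma plurality_veto_survivor (I T : seq V) : size T = (size I).+1 ->
  exists2 j, j \in T & exists2 T', perm_eq (j :: T') T &
    all2 (fun i k => rank i (top j) <= rank i (top k)) I T'.
Proof.
elim: I T => [|i I IH] [|j0 T] //= [sizeT].
  by case: T sizeT => // _; exists j0; rewrite ?mem_head //; exists [::].
have [jmax jmaxT jmax_max] := arg_maxnP (fun k => rank i (top k)) (mem_head j0 T).
have [|j jrem [T' permT' allT']] := IH (rem jmax (j0 :: T)).
  by rewrite size_rem //= sizeT.
exists j; first exact: mem_rem jrem.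
exists (jmax :: T').
  by rewrite (perm_catCA [:: j] [:: jmax] T') (permPr (perm_to_rem jmaxT)) perm_cons.
by rewrite /= allT' andbT; exact: jmax_max (mem_rem jrem).
Qed.

Lemma plurality_veto (I T : seq V) : size I = size T -> T != [::] ->
  exists a T', perm_eq T' T /\ all2 (fun i k => rank i a <= rank i (top k)) I T'.
Proof.
case: I => [|i I] sizeT; first by rewrite -size_eq0 -sizeT.
have [j _ [T' permT' allT']] := plurality_veto_survivor (esym sizeT).
by exists (top j), (j :: T'); rewrite /= leqnn.
Qed.

End PluralityVeto.

Lemma all2_map_r (S T : Type) (r : S -> T -> bool) (f : S -> T) (s : seq S) :
  all2 r s (map f s) = all (fun x => r x (f x)) s.
Proof. by elim: s => //= x s ->. Qed.

Lemma all2_enum_perm n (r : rel 'I_n) (s : seq 'I_n) :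
  perm_eq s (enum 'I_n) -> all2 r (enum 'I_n) s ->
  exists pi : {perm 'I_n}, forall i, r i (pi i).
Proof.
rewrite -val_ord_tuple => /tuple_permP[pi ->]; rewrite /= all2_map_r => /allP r_pi.
by exists pi => i; have := r_pi i (mem_enum _ i); rewrite tnth_ord_tuple.
Qed.

Lemma is_top_invp n m (sigma : profile n m.+1) j : is_top sigma j ((sigma j)^-1%g ord0).
Proof. by apply/forallP => c; rewrite permKV. Qed.

Lemma plurality_matching_exists n m (sigma : profile n m.+1) :
  exists a, has_perfect_matching sigma a.
Proof.
case: n sigma => [|n] sigma; first by exists ord0, 1%g => -[].
pose top j := (sigma j)^-1%g ord0.
have [|a [T [permT allT]]] :=
  plurality_veto top (fun i c => sigma i c) (erefl (size (enum 'I_n.+1))).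
  by rewrite -size_eq0 size_enum_ord.
have [pi a_pi] := all2_enum_perm permT allT.
by exists a, pi => i; apply/existsP; exists (top (pi i)); rewrite is_top_invp; apply: a_pi.
Qed.

Local Open Scope ring_scope.

Section DistortionUpperBound.

Variables (R : realFieldType) (n m : nat) (sigma : profile n m).
Variable d : point n m -> point n m -> R.
Hypotheses (d_metric : is_metric d) (d_consistent : consistent sigma d).

Lemma consistent_weakly_prefers i c c' :
  weakly_prefers sigma i c c' -> d (inl i) (inr c) <= d (inl i) (inr c').
Proof.
rewrite /weakly_prefers leq_eqVlt => /orP[/eqP/val_inj/perm_inj-> //|]; exact: d_consistent.
Qed.

Lemma dom_edge_dist_le a c i j : dom_edge sigma a i j ->
  d (inl i) (inr a) <= d (inl i) (inr c) + 2 * d (inl j) (inr c).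
Proof.
case/existsP=> t /andP[/forallP top_t a_t].
have [_ _ d_sym d_tri] := d_metric.
have i_a := consistent_weakly_prefers a_t.
have j_t := consistent_weakly_prefers (top_t c).
have i_t := d_tri (inl i) (inr c) (inr t).
have c_t := d_tri (inr c) (inl j) (inr t).
rewrite (d_sym (inr c) (inl j)) in c_t.
lra.
Qed.

Lemma perfect_matching_distortion a c :
  has_perfect_matching sigma a -> SC d a <= 3 * SC d c.
Proof.
case=> pi edge_pi; rewrite /SC.
apply: le_trans (ler_sum _ (fun i _ => dom_edge_dist_le c (edge_pi i))) _.
have sum_pi : \sum_i d (inl (pi i)) (inr c) = \sum_i d (inl i) (inr c).
  by rewrite [RHS](reindex_perm pi).
by rewrite big_split /= -mulr_sumr sum_pi; lra.
Qed.

End DistortionUpperBound.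

Lemma line_metric (R : realFieldType) n m (x : point n m -> R) :
  is_metric (fun p q => `|x p - x q|).
Proof.
split=> [p q|p|p q|p q r]; first exact: normr_ge0.
- by rewrite subrr normr0.
- exact: distrC.
- exact: ler_distD.
Qed.

Section DistortionLowerBound.

Variables (R : realFieldType) (n m : nat) (sigma : profile n m).

Lemma line_instance_top (u : 'I_n) (b w : 'I_m) : is_top sigma u b -> w != b ->
  exists d : point n m -> point n m -> R,
    [/\ is_metric d, consistent sigma d, SC d b = n.-1%:R & SC d w = SC d b + 2].
Proof.
move=> /forallP top_b w_b.
pose x (p : point n m) : R :=
  match p with inl i => if i == u then 0 else 1 | inr c => if c == b then 0 else 2 end.
pose d p q := `|x p - x q|.
have d_voter i c : d (inl i) (inr c) = if i == u then if c == b then 0 else 2 else 1.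
  rewrite /d /x; case: (i == u); case: (c == b);
    by [rewrite subrr normr0 | rewrite ger0_norm ?subr0 | rewrite ler0_norm; lra].
have SC_d c : SC d c = (if c == b then 0 else 2) + n.-1%:R.
  rewrite /SC (bigD1 u) //= d_voter eqxx; congr (_ + _).
  under eq_bigr => i /negbTE iu do rewrite d_voter iu.
  by rewrite sumr_const cardC1 card_ord.
exists d; split; first exact: line_metric.
- move=> i c c' lt_cc'; rewrite !d_voter.
  case: eqVneq lt_cc' => [-> lt_cc'|_ _] //.
  have /negbTE-> : c' != b by apply: contraTneq lt_cc' => ->; rewrite -leqNgt top_b.
  by case: (c == b); lra.
- by rewrite SC_d eqxx add0r.
- by rewrite !SC_d eqxx (negbTE w_b) add0r addrC.
Qed.

End DistortionLowerBound.

Lemma rule_distortion_ge3 (R : realFieldType) m (f : rule m.+2) (beta : R) : beta < 3 ->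
  exists n (sigma : profile n m.+2) (d : point n m.+2 -> point n m.+2 -> R) c,
    [/\ is_metric d, consistent sigma d & beta * SC d c < SC d (f n sigma)].
Proof.
move=> beta_lt3.
pose sigma : profile 2 m.+2 := fun i => if i == ord0 then 1%g else tperm ord0 (lift ord0 ord0).
pose top j := (sigma j)^-1%g ord0.
have [u w_top_u] : exists u, f 2 sigma != top u.
  have [->|] := eqVneq (f 2 sigma) (top ord0); last by exists ord0.
  by exists (lift ord0 ord0); rewrite /top /sigma /= invg1 perm1 tpermV tpermL.
have [d [d_metric d_consistent SC_top SC_w]] :=
  line_instance_top R (is_top_invp sigma u) w_top_u.
by exists 2%N, sigma, d, (top u); split=> //; rewrite SC_w SC_top /=; lra.
Qed.

Theorem corollary2 (R : realFieldType) (m : nat) (hm : (2 <= m)%N) :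
  (* PluralityMatching is well defined: some candidate always qualifies *)
  (forall n (sigma : profile n m), exists a, has_perfect_matching sigma a)
  /\
  (* distortion at most 3, for every candidate it may return *)
  (forall n (sigma : profile n m) (a : 'I_m), has_perfect_matching sigma a ->
     forall d : point n m -> point n m -> R,
       is_metric d -> consistent sigma d ->
       forall c : 'I_m, SC d a <= 3 * SC d c)
  /\
  (* no deterministic rule has distortion smaller than 3 *)
  (forall (f : rule m) (beta : R), beta < 3 ->
     exists n (sigma : profile n m) (d : point n m -> point n m -> R) (c : 'I_m),
       [/\ is_metric d, consistent sigma d & beta * SC d c < SC d (f n sigma)]).
Proof.
case: m hm => [|[|m]] // _.
split; first by move=> n; exact: plurality_matching_exists.
split; last exact: rule_distortion_ge3.
move=> n sigma a a_matching d d_metric d_consistent c.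
exact (perfect_matching_distortion d_metric d_consistent c a_matching).
Qed.
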